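(* Let $m_0>0$ and $U_0>0$ with $m_0\le U_0$. There exist parameters $\eta>0$ and $\alpha\in[0,1]$, depending only on $m_0,U_0,d$, such that the fixed-share algorithm with these parameters satisfies the following: for all $T\ge1$, all loss vectors $\ell_1,\dots,\ell_T\in[0,1]^d$, and all $u_1,\dots,u_T\in\mathbb R_+^d$ with $\|u_1\|_1+m(u_1^T)\le m_0$ and $\sum_{t=1}^T\|u_t\|_1\le U_0$, \[ \sum_{t=1}^T\|u_t\|_1\hat p_t^\top\ell_t-\sum_{t=1}^Tu_t^\top\ell_t\le\sqrt{\frac{U_0}{2}\Big(m_0\ln d+U_0\,h\Big(\frac{m_0}{U_0}\Big)\Big)}\le\sqrt{\frac{U_0m_0}{2}\Big(\ln d+\ln\frac{eU_0}{m_0}\Big)}. \]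
   Context: Let $d\ge1$ and $\Delta_d=\{q\in[0,1]^d:\sum_{i=1}^d q_i=1\}$. The generalized share algorithm with learning rate $\eta>0$ and mixing functions $\psi_t:[0,1]^{td}\to\Delta_d$ ($t\ge2$) works as follows: $\hat p_1=v_1=(1/d,\dots,1/d)$. At each round $t=1,2,\dots$ it predicts $\hat p_t=(\hat p_{1,t},\dots,\hat p_{d,t})\in\Delta_d$, observes a loss vector $\ell_t=(\ell_{1,t},\dots,\ell_{d,t})\in[0,1]^d$ (arbitrary), and suffers loss $\hat p_t^\top\ell_t$. It then forms the pre-weights $v_{j,t+1}=\hat p_{j,t}e^{-\eta\ell_{j,t}}/\sum_{i=1}^d\hat p_{i,t}e^{-\eta\ell_{i,t}}$ for $j=1,\dots,d$, sets $v_{t+1}=(v_{1,t+1},\dots,v_{d,t+1})$, and defines $\hat p_{t+1}=\psi_{t+1}(V_{t+1})$ where $V_{t+1}=[v_{i,s}]_{1\le i\le d,1\le s\le t+1}$ is the $d\times(t+1)$ matrix of all pre-weights so far. The fixed-share algorithm with parameters $\eta>0$, $\alpha\in[0,1]$ is the generalized share algorithm with the mixing rule $\hat p_{j,t+1}=\alpha/d+(1-\alpha)v_{j,t+1}$ for all $j$ and $t\ge1$. For $x,y\in\mathbb R_+^d$, $D_{\mathrm{TV}}(x,y)=\sum_{i:\,x_i\ge y_i}(x_i-y_i)$, and for $u_1,\dots,u_T\in\mathbb R_+^d$, $m(u_1^T)=\sum_{t=2}^T D_{\mathrm{TV}}(u_t,u_{t-1})$. $h(x)=-x\ln x-(1-x)\ln(1-x)$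 is the binary entropy on $[0,1]$ (with $0\ln0=0$). *)

From Stdlib Require Import Reals.
Open Scope R_scope.

Fixpoint sumR (n : nat) (f : nat -> R) : R :=
  match n with
  | O => 0
  | S k => sumR k f + f k
  end.

(* Vectors in R^d are functions nat -> R, coordinates 0..d-1 used. *)
Definition dot (d : nat) (x y : nat -> R) : R := sumR d (fun i => x i * y i).

Definition norm1 (d : nat) (x : nat -> R) : R := sumR d (fun i => Rabs (x i)).

Definition DTV (d : nat) (x y : nat -> R) : R :=
  sumR d (fun i => if Rle_dec (y i) (x i) then x i - y i else 0).

(* m(u_1^T) = sum_{t=2}^T D_TV(u_t, u_{t-1}); rounds indexed from 1 *)
Definition mshift (d T : nat) (u : nat -> nat -> R) : R :=
  sumR (T - 1) (fun k => DTV d (u (S (S k))) (u (S k))).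

Definition xlnx (x : R) : R := if Rle_dec x 0 then 0 else x * ln x.

Definition hbin (x : R) : R := - xlnx x - xlnx (1 - x).

(* Fixed-share algorithm.  fs_pred eta alpha d l n is the prediction
   \hat p_{n+1} (rounds indexed from 1), l t i = \ell_{i,t}. *)
Fixpoint fs_pred (eta alpha : R) (d : nat) (l : nat -> nat -> R) (n : nat)
  : nat -> R :=
  match n with
  | O => fun _ => / INR d
  | S k =>
      let p := fs_pred eta alpha d l k in
      let Z := sumR d (fun i => p i * exp (- eta * l (S k) i)) in
      fun j => alpha / INR d + (1 - alpha) * (p j * exp (- eta * l (S k) j) / Z)
  end.

Definition phat (eta alpha : R) (d : nat) (l : nat -> nat -> R) (t : nat)
  : nat -> R := fs_pred eta alpha d l (t - 1).

From Stdlib Require Import Reals Lra Psatz Lia.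
From Coquelicot Require Import Coquelicot.
Open Scope R_scope.

(* The core is the classical fixed-share analysis (Theorem [fixed_share_regret]):
   for every nonnegative comparator sequence u, with U its total mass and m its
   shifting mass,
     eta * regret <= |u_1| ln d + m ln (d / alpha)
                     + (U - |u_1| - m) ln (1 / (1 - alpha)) + eta^2 U / 8.
   It combines a one-round bound (Hoeffding's lemma applied to the normalizer
   of the exponential update) with a telescoping sum of log-weights, where each
   mixing step costs ln (d / alpha) per unit of added mass and
   ln (1 / (1 - alpha)) per unit of kept mass.

   The corollary then splits on r = m0 / U0.  If r <= d / (d + 1), choosing
   alpha = r makes the right-hand side at most K + eta^2 U0 / 8 with
   K = m0 ln d + U0 h(r), and the tuned eta = sqrt (8 K / U0) gives
   sqrt (U0 K / 2).  Otherwise alpha = 1 (uniform prediction) suffices, because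
   its regret (1 - 1/d) U0 is below sqrt (U0 K / 2).  The second inequality of
   the statement is h(r) <= r ln (e / r). *)

(** Finite sums. *)

Lemma sumR_ext n f g : (forall i, (i < n)%nat -> f i = g i) -> sumR n f = sumR n g.
Proof.
induction n as [|n IH]; intros H; simpl; [reflexivity|].
rewrite IH by (intros; apply H; lia). rewrite H by lia. reflexivity.
Qed.

Lemma sumR_le n f g : (forall i, (i < n)%nat -> f i <= g i) -> sumR n f <= sumR n g.
Proof.
induction n as [|n IH]; intros H; simpl; [lra|].
pose proof (H n ltac:(lia)); pose proof (IH ltac:(intros; apply H; lia)); lra.
Qed.

Lemma sumR_plus n f g : sumR n (fun i => f i + g i) = sumR n f + sumR n g.
Proof. induction n as [|n IH]; simpl; [ring|]. rewrite IH; ring. Qed.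

Lemma sumR_minus n f g : sumR n (fun i => f i - g i) = sumR n f - sumR n g.
Proof. induction n as [|n IH]; simpl; [ring|]. rewrite IH; ring. Qed.

Lemma sumR_scal n c f : sumR n (fun i => c * f i) = c * sumR n f.
Proof. induction n as [|n IH]; simpl; [ring|]. rewrite IH; ring. Qed.

Lemma sumR_scal_r n f c : sumR n (fun i => f i * c) = sumR n f * c.
Proof. induction n as [|n IH]; simpl; [ring|]. rewrite IH; ring. Qed.

Lemma sumR_const n c : sumR n (fun _ => c) = INR n * c.
Proof. induction n as [|n IH]; simpl sumR; [simpl; ring|]. rewrite IH, S_INR; ring. Qed.

Lemma sumR_nonneg n f : (forall i, (i < n)%nat -> 0 <= f i) -> 0 <= sumR n f.
Proof. intros H. rewrite <- (Rmult_0_r (INR n)), <- sumR_const. apply sumR_le; auto. Qed.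

Lemma sumR_nonpos n f : (forall i, (i < n)%nat -> f i <= 0) -> sumR n f <= 0.
Proof. intros H. rewrite <- (Rmult_0_r (INR n)), <- sumR_const. apply sumR_le; auto. Qed.

Lemma sumR_term_le n f j :
  (forall i, (i < n)%nat -> 0 <= f i) -> (j < n)%nat -> f j <= sumR n f.
Proof.
induction n as [|n IH]; intros H Hj; [lia|]. simpl.
destruct (Nat.eq_dec j n) as [->|Hne].
- pose proof (sumR_nonneg n f ltac:(intros; apply H; lia)); lra.
- pose proof (IH ltac:(intros; apply H; lia) ltac:(lia)); pose proof (H n ltac:(lia)); lra.
Qed.

Lemma sumR_shift n f : sumR (S n) f = f 0%nat + sumR n (fun k => f (S k)).
Proof. induction n as [|n IH]; simpl; [ring|]. simpl in IH. rewrite IH; ring. Qed.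

Lemma sumR_le_term_plus n f i : (i < n)%nat -> (forall j, (j < n)%nat -> f j <= 1) ->
  sumR n f <= f i + (INR n - 1).
Proof.
induction n as [|n IH]; intros Hi H; [lia|]. simpl sumR. rewrite S_INR.
destruct (Nat.eq_dec i n) as [->|Hne].
- assert (Hs : sumR n f <= sumR n (fun _ => 1)) by (apply sumR_le; intros; apply H; lia).
  rewrite sumR_const in Hs; lra.
- pose proof (IH ltac:(lia) ltac:(intros; apply H; lia)); pose proof (H n ltac:(lia)); lra.
Qed.

Lemma INR_d_pos d : (1 <= d)%nat -> 0 < INR d.
Proof. intros Hd. apply lt_0_INR; lia. Qed.

Lemma norm1_eq d (x : nat -> R) : (forall i, (i < d)%nat -> 0 <= x i) -> norm1 d x = sumR d x.
Proof. intros H. apply sumR_ext; intros i Hi. apply Rabs_pos_eq; auto. Qed.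

Lemma ln_le x y : 0 < x -> x <= y -> ln x <= ln y.
Proof. intros Hx Hxy. destruct (Req_dec x y) as [->|]; [lra|]. left; apply ln_increasing; lra. Qed.

Lemma ln_le_sub1 x : 0 < x -> ln x <= x - 1.
Proof. intros Hx. pose proof (exp_ineq1_le (ln x)) as H. rewrite exp_ln in H by lra. lra. Qed.

Lemma ln_nonneg x : 1 <= x -> 0 <= ln x.
Proof. intros. rewrite <- ln_1. apply ln_le; lra. Qed.

Lemma ln_nonpos x : 0 < x -> x <= 1 -> ln x <= 0.
Proof. intros. rewrite <- ln_1. apply ln_le; lra. Qed.

(* Convexity of y |-> exp (- eta * y) on [0, 1]: the chord lies above the graph. *)
Lemma exp_chord eta x : 0 <= x <= 1 -> exp (- eta * x) <= 1 - x + x * exp (- eta).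
Proof.
intros Hx.
pose proof (exp_ineq1_le (eta * x)). pose proof (exp_ineq1_le (- eta * (1 - x))).
assert (E1 : exp (- eta * x) * exp (eta * x) = 1).
{ rewrite <- exp_plus. replace (- eta * x + eta * x) with 0 by ring. apply exp_0. }
assert (E2 : exp (- eta * x) * exp (- eta * (1 - x)) = exp (- eta)).
{ rewrite <- exp_plus. f_equal; ring. }
pose proof (exp_pos (- eta * x)).
assert (0 <= exp (- eta * x) * (1 - x) * (exp (eta * x) - (1 + eta * x)))
  by (apply Rmult_le_pos; [apply Rmult_le_pos|]; lra).
assert (0 <= exp (- eta * x) * x * (exp (- eta * (1 - x)) - (1 + - eta * (1 - x))))
  by (apply Rmult_le_pos; [apply Rmult_le_pos|]; lra).
nra.
Qed.

Lemma nondecreasing_of_derive (f df : R -> R) a b : a <= b ->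
  (forall x, a <= x <= b -> is_derive f x (df x)) ->
  (forall x, a <= x <= b -> 0 <= df x) -> f a <= f b.
Proof.
intros Hab Hd Hp. destruct (Req_dec a b) as [->|Hne]; [lra|].
destruct (MVT_gen f a b df) as [c [Hc Heq]].
- intros x Hx. apply Hd. rewrite Rmin_left, Rmax_right in Hx by lra. lra.
- intros x Hx. rewrite Rmin_left, Rmax_right in Hx by lra.
  apply derivable_continuous_pt. exists (df x). apply is_derive_Reals, Hd. lra.
- rewrite Rmin_left, Rmax_right in Hc by lra.
  assert (0 <= df c * (b - a)) by (apply Rmult_le_pos; [apply Hp; lra| lra]). lra.
Qed.

(* Hoeffding's lemma for a [0,1]-valued variable of mean mu:
   ln E[exp (- eta X)] <= - eta mu + eta^2 / 8, the expectation being bounded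
   by the chord value 1 - mu + mu exp (- eta).  Proved by differentiating twice in eta. *)
Lemma hoeffding_lemma mu eta : 0 <= mu <= 1 -> 0 <= eta ->
  ln (1 - mu + mu * exp (- eta)) <= - eta * mu + eta ^ 2 / 8.
Proof.
intros Hmu Heta.
set (A := fun y => 1 - mu + mu * exp (- y)).
assert (HA : forall y, 0 < A y).
{ intros y. unfold A. pose proof (exp_pos (- y)).
  destruct (Req_dec mu 0); [subst; lra| nra]. }
assert (HA0 : A 0 = 1) by (unfold A; rewrite Ropp_0, exp_0; ring).
(* first derivative of eta |-> - eta mu + eta^2/8 - ln (A eta) is nonnegative *)
assert (Hd1 : forall y, 0 <= y -> 0 <= - mu + y / 4 + mu * exp (- y) / A y).
{ intros y Hy.
  replace 0 with (- mu + 0 / 4 + mu * exp (- 0) / A 0) at 1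
    by (rewrite HA0, Ropp_0, exp_0; field).
  apply (nondecreasing_of_derive (fun y => - mu + y / 4 + mu * exp (- y) / A y)
     (fun y => 1/4 - mu * (1 - mu) * exp (- y) / (A y)^2)); [lra| |].
  - intros x _. pose proof (HA x). unfold A in *. auto_derive; [lra| field; lra].
  - intros x _. pose proof (HA x). pose proof (exp_pos (- x)).
    assert (mu * (1 - mu) * exp (- x) / A x ^ 2 <= 1/4); [|lra].
    apply Rmult_le_reg_r with (A x ^ 2); [nra|].
    unfold Rdiv. rewrite Rmult_assoc, Rinv_l by (apply pow_nonzero; lra).
    unfold A. pose proof (pow2_ge_0 (1 - mu - mu * exp (- x))). nra. }
assert (H : 0 - ln (A 0) <= - eta * mu + eta ^ 2 / 8 - ln (A eta)).
{ replace (0 - ln (A 0)) with (- 0 * mu + 0 ^ 2 / 8 - ln (A 0)) by field.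
  apply (nondecreasing_of_derive (fun y => - y * mu + y ^ 2 / 8 - ln (A y))
     (fun y => - mu + y / 4 + mu * exp (- y) / A y)); [lra| |].
  - intros x _. pose proof (HA x). unfold A in *. auto_derive; [lra| field; lra].
  - intros x Hx. apply Hd1. lra. }
rewrite HA0, ln_1 in H. unfold A in H. lra.
Qed.

Lemma ln_ge_rational x : 1 <= x -> 2 * (x - 1) / (x + 1) <= ln x.
Proof.
intros Hx.
cut (ln 1 - 2 * (1 - 1) / (1 + 1) <= ln x - 2 * (x - 1) / (x + 1));
  [rewrite ln_1; lra|].
apply (nondecreasing_of_derive (fun y => ln y - 2 * (y - 1) / (y + 1))
  (fun y => / y - 4 / (y + 1) ^ 2)); [lra| |].
- intros y Hy. auto_derive; [lra| field; lra].
- intros y Hy. assert (4 / (y + 1) ^ 2 <= / y); [|lra].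
  apply Rmult_le_reg_r with ((y + 1) ^ 2 * y); [nra|].
  field_simplify; nra.
Qed.

Lemma hbin_eq r : 0 < r < 1 -> hbin r = - r * ln r - (1 - r) * ln (1 - r).
Proof.
intros H. unfold hbin, xlnx.
destruct (Rle_dec r 0); [lra|]. destruct (Rle_dec (1 - r) 0); [lra|]. ring.
Qed.

Lemma hbin_1 : hbin 1 = 0.
Proof.
unfold hbin, xlnx. destruct (Rle_dec 1 0); [lra|].
destruct (Rle_dec (1 - 1) 0); [|lra]. rewrite ln_1; ring.
Qed.

(* h(r) <= r ln (e / r), from - ln (1 - r) <= r / (1 - r). *)
Lemma hbin_le r : 0 < r <= 1 -> hbin r <= r * (1 - ln r).
Proof.
intros Hr. destruct (Req_dec r 1) as [->|Hne]; [rewrite hbin_1, ln_1; lra|].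
rewrite hbin_eq by lra.
pose proof (ln_le_sub1 (/ (1 - r)) ltac:(apply Rinv_0_lt_compat; lra)) as H.
rewrite ln_Rinv in H by lra.
assert ((/ (1 - r) - 1) * (1 - r) = r) by (field; lra).
assert (0 < 1 - r) by lra. nra.
Qed.

Lemma hbin_ge r D : 0 < r <= 1 -> 0 < D -> D * (1 - r) <= 1 -> (1 - r) * ln D <= hbin r.
Proof.
intros Hr HD HDr. destruct (Req_dec r 1) as [->|Hne]; [rewrite hbin_1; lra|].
rewrite hbin_eq by lra.
assert (Hlnr : ln r <= 0) by (apply ln_nonpos; lra).
assert (Hprod : ln (D * (1 - r)) <= 0) by (apply ln_nonpos; [apply Rmult_lt_0_compat|]; lra).
rewrite ln_mult in Hprod by lra.
assert (0 <= (1 - r) * (- (ln D + ln (1 - r)))) by (apply Rmult_le_pos; lra).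
assert (0 <= r * (- ln r)) by (apply Rmult_le_pos; lra). nra.
Qed.

(** Total variation and the decomposition of the comparator mass. *)

Lemma DTV_add_min d (x y : nat -> R) :
  DTV d x y + sumR d (fun i => Rmin (y i) (x i)) = sumR d x.
Proof.
unfold DTV. rewrite <- sumR_plus. apply sumR_ext. intros i _.
destruct (Rle_dec (y i) (x i)); [rewrite Rmin_left | rewrite Rmin_right]; lra.
Qed.

Lemma mass_decomposition d T (u : nat -> nat -> R) : (1 <= T)%nat ->
  (forall t i, (1 <= t <= T)%nat -> (i < d)%nat -> 0 <= u t i) ->
  norm1 d (u 1%nat) + mshift d T u
    + sumR (T - 1) (fun k => sumR d (fun i => Rmin (u (S k) i) (u (S (S k)) i)))
  = sumR T (fun k => norm1 d (u (S k))).
Proof.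
intros HT Hu. destruct T as [|T]; [lia|].
unfold mshift. replace (S T - 1)%nat with T by lia.
rewrite sumR_shift, Rplus_assoc, <- sumR_plus. f_equal.
apply sumR_ext. intros k Hk.
rewrite !norm1_eq by (intros; apply Hu; lia). apply DTV_add_min.
Qed.

(* Cost of one mixing step for a single coordinate: with weight a on the old
   pre-weight v and weight b on the new prediction q >= max (e^-Ld, e^-L1 v),
   only the added mass b - a pays the full price Ld. *)
Lemma mixing_coord a b v q Ld L1 : 0 <= a -> 0 <= b -> 0 < v <= 1 ->
  - Ld <= ln q -> - L1 + ln v <= ln q ->
  a * ln v - b * ln q <= Ld * (if Rle_dec a b then b - a else 0) + L1 * Rmin a b.
Proof.
intros Ha Hb Hv Hq1 Hq2. pose proof (ln_nonpos v (proj1 Hv) (proj2 Hv)).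
destruct (Rle_dec a b).
- rewrite Rmin_left by lra.
  assert (0 <= a * (ln q - ln v + L1)) by (apply Rmult_le_pos; lra).
  assert (0 <= (b - a) * (ln q + Ld)) by (apply Rmult_le_pos; lra). nra.
- rewrite Rmin_right by lra.
  assert (0 <= b * (ln q - ln v + L1)) by (apply Rmult_le_pos; lra).
  assert (0 <= (a - b) * (- ln v)) by (apply Rmult_le_pos; lra). nra.
Qed.

Definition regret (eta alpha : R) (d : nat) (l u : nat -> nat -> R) (T : nat) : R :=
  sumR T (fun k => norm1 d (u (S k)) * dot d (phat eta alpha d l (S k)) (l (S k)))
  - sumR T (fun k => dot d (u (S k)) (l (S k))).

(** The fixed-share algorithm and its regret against shifting comparators. *)

Section FixedShare.

Variables (eta alpha : R) (d : nat) (l : nat -> nat -> R).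
Hypothesis Hd : (1 <= d)%nat.
Hypothesis Halpha : 0 <= alpha <= 1.

Local Notation p := (fs_pred eta alpha d l).

Definition Zf (k : nat) : R := sumR d (fun i => p k i * exp (- eta * l (S k) i)).

(* Pre-weights v_{k+2} computed from the prediction of round k + 1. *)
Definition Vf (k i : nat) : R := p k i * exp (- eta * l (S k) i) / Zf k.

Lemma fs_S k j : p (S k) j = alpha / INR d + (1 - alpha) * Vf k j.
Proof. reflexivity. Qed.

Lemma weighted_sum_pos (q x : nat -> R) :
  (forall i, (i < d)%nat -> 0 < q i) -> 0 < sumR d (fun i => q i * exp (x i)).
Proof.
intros Hq. apply Rlt_le_trans with (q 0%nat * exp (x 0%nat)).
- apply Rmult_lt_0_compat; [apply Hq; lia| apply exp_pos].
- apply (sumR_term_le d (fun i => q i * exp (x i))); [|lia].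
  intros i Hi. apply Rmult_le_pos; [left; apply Hq; auto| left; apply exp_pos].
Qed.

Lemma fs_simplex k : (forall i, (i < d)%nat -> 0 < p k i) /\ sumR d (p k) = 1.
Proof.
pose proof (INR_d_pos d Hd) as Hdp.
induction k as [|k [IHpos IHsum]].
- split; [intros i _; apply Rinv_0_lt_compat; auto|].
  simpl fs_pred. rewrite sumR_const. field. lra.
- assert (HZ : 0 < Zf k) by (apply weighted_sum_pos; auto).
  split.
  + intros i Hi. rewrite fs_S. unfold Vf.
    assert (0 < p k i * exp (- eta * l (S k) i) / Zf k).
    { apply Rdiv_lt_0_compat; auto. apply Rmult_lt_0_compat; [auto| apply exp_pos]. }
    assert (0 < alpha / INR d \/ 0 < 1 - alpha) as [|]
      by (destruct (Req_dec alpha 0); [right | left; apply Rdiv_lt_0_compat]; lra).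
    * assert (0 <= 1 - alpha) by lra. nra.
    * assert (0 <= alpha / INR d) by (apply Rdiv_le_0_compat; lra). nra.
  + rewrite (sumR_ext _ _ (fun j => alpha / INR d
        + (1 - alpha) * / Zf k * (p k j * exp (- eta * l (S k) j)))).
    2:{ intros j _. rewrite fs_S. unfold Vf, Rdiv. ring. }
    rewrite sumR_plus, sumR_const, sumR_scal. fold (Zf k). field. split; lra.
Qed.

Lemma Zf_pos k : 0 < Zf k.
Proof. apply weighted_sum_pos, fs_simplex. Qed.

Lemma Vf_bounds k i : (i < d)%nat -> 0 < Vf k i <= 1.
Proof.
intros Hi. destruct (fs_simplex k) as [Hp _]. pose proof (Zf_pos k).
unfold Vf. split.
- apply Rdiv_lt_0_compat; auto. apply Rmult_lt_0_compat; [auto| apply exp_pos].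
- apply Rmult_le_reg_r with (Zf k); auto. unfold Rdiv.
  rewrite Rmult_assoc, Rinv_l, Rmult_1_r, Rmult_1_l by lra.
  apply (sumR_term_le d (fun i => p k i * exp (- eta * l (S k) i))); auto.
  intros j Hj. apply Rmult_le_pos; [left; auto| left; apply exp_pos].
Qed.

Lemma log_update k i : (i < d)%nat ->
  ln (Vf k i) - ln (p k i) = - eta * l (S k) i - ln (Zf k).
Proof.
intros Hi. destruct (fs_simplex k) as [Hp _]. pose proof (Zf_pos k).
pose proof (Hp i Hi). pose proof (exp_pos (- eta * l (S k) i)).
unfold Vf, Rdiv.
rewrite ln_mult by (try apply Rmult_lt_0_compat; try apply Rinv_0_lt_compat; auto).
rewrite ln_mult, ln_exp, ln_Rinv by auto. ring.
Qed.

Lemma ln_Zf_le k : 0 <= eta -> (forall i, (i < d)%nat -> 0 <= l (S k) i <= 1) ->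
  ln (Zf k) <= - eta * dot d (p k) (l (S k)) + eta ^ 2 / 8.
Proof.
intros Heta Hl. destruct (fs_simplex k) as [Hp Hs].
set (mu := dot d (p k) (l (S k))).
assert (Hmu : 0 <= mu <= 1).
{ unfold mu, dot. split.
  - apply sumR_nonneg. intros i Hi. apply Rmult_le_pos; [left|apply Hl]; auto.
  - rewrite <- Hs. apply sumR_le. intros i Hi.
    pose proof (Hp i Hi). pose proof (Hl i Hi). nra. }
assert (HZ : Zf k <= 1 - mu + mu * exp (- eta)).
{ apply Rle_trans with (sumR d (fun i => p k i + (exp (- eta) - 1) * (p k i * l (S k) i))).
  - apply sumR_le. intros i Hi.
    pose proof (exp_chord eta (l (S k) i) (Hl i Hi)). pose proof (Hp i Hi). nra.
  - rewrite sumR_plus, sumR_scal, Hs. unfold mu, dot. lra. }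
eapply Rle_trans; [apply ln_le; [apply Zf_pos| exact HZ]|].
apply hoeffding_lemma; auto.
Qed.

Lemma round_bound k (u : nat -> R) : 0 <= eta ->
  (forall i, (i < d)%nat -> 0 <= l (S k) i <= 1) -> (forall i, (i < d)%nat -> 0 <= u i) ->
  eta * (norm1 d u * dot d (phat eta alpha d l (S k)) (l (S k)) - dot d u (l (S k)))
  <= sumR d (fun i => u i * (ln (Vf k i) - ln (p k i))) + eta ^ 2 / 8 * norm1 d u.
Proof.
intros Heta Hl Hu.
unfold phat. rewrite Nat.sub_succ, Nat.sub_0_r, norm1_eq by auto.
rewrite (sumR_ext d (fun i => u i * (ln (Vf k i) - ln (p k i)))
  (fun i => - eta * (u i * l (S k) i) + - ln (Zf k) * u i))
  by (intros i Hi; rewrite log_update by auto; ring).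
rewrite sumR_plus, !sumR_scal. fold (dot d u (l (S k))).
pose proof (ln_Zf_le k Heta Hl).
assert (0 <= sumR d u) by (apply sumR_nonneg; auto).
nra.
Qed.


Lemma mixing_step k (a b : nat -> R) : 0 < alpha < 1 ->
  (forall i, (i < d)%nat -> 0 <= a i) -> (forall i, (i < d)%nat -> 0 <= b i) ->
  sumR d (fun i => a i * ln (Vf k i)) - sumR d (fun i => b i * ln (p (S k) i))
  <= DTV d b a * (- ln (alpha / INR d))
     + sumR d (fun i => Rmin (a i) (b i)) * (- ln (1 - alpha)).
Proof.
intros Ha01 Ha Hb. pose proof (INR_d_pos d Hd) as Hdp.
unfold DTV. rewrite <- sumR_minus, Rmult_comm, <- sumR_scal.
rewrite (Rmult_comm _ (- ln (1 - alpha))), <- sumR_scal, <- sumR_plus.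
apply sumR_le. intros i Hi.
pose proof (Vf_bounds k i Hi) as HV.
assert (0 < alpha / INR d) by (apply Rdiv_lt_0_compat; lra).
assert (0 < (1 - alpha) * Vf k i) by (apply Rmult_lt_0_compat; lra).
apply mixing_coord; auto; rewrite fs_S.
- rewrite Ropp_involutive. apply ln_le; lra.
- rewrite Ropp_involutive, <- ln_mult by lra. apply ln_le; lra.
Qed.

(* Summing the per-round log-weight changes telescopes, up to the mixing costs. *)
Lemma telescoping (u : nat -> nat -> R) n : 0 < alpha < 1 ->
  (forall t i, (1 <= t <= S n)%nat -> (i < d)%nat -> 0 <= u t i) ->
  sumR (S n) (fun k => sumR d (fun i => u (S k) i * (ln (Vf k i) - ln (p k i))))
  <= norm1 d (u 1%nat) * ln (INR d)
     + sumR n (fun k => DTV d (u (S (S k))) (u (S k)) * (- ln (alpha / INR d))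
                        + sumR d (fun i => Rmin (u (S k) i) (u (S (S k)) i)) * (- ln (1 - alpha)))
     + sumR d (fun i => u (S n) i * ln (Vf n i)).
Proof.
intros Ha01. pose proof (INR_d_pos d Hd) as Hdp.
induction n as [|n IH]; intros Hu.
- simpl sumR at 1 3. rewrite Rplus_0_l, Rplus_0_r, norm1_eq by (intros; apply Hu; lia).
  rewrite (sumR_ext d (fun i => u 1%nat i * (ln (Vf 0 i) - ln (/ INR d)))
    (fun i => ln (INR d) * u 1%nat i + u 1%nat i * ln (Vf 0 i)))
    by (intros i Hi; rewrite ln_Rinv by auto; ring).
  rewrite sumR_plus, sumR_scal. lra.
- specialize (IH ltac:(intros; apply Hu; lia)).
  pose proof (mixing_step n (u (S n)) (u (S (S n))) Ha01
    ltac:(intros; apply Hu; lia) ltac:(intros; apply Hu; lia)) as Hmix.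
  change (sumR (S (S n)) ?F) with (sumR (S n) F + F (S n)).
  change (sumR (S n) ?F) with (sumR n F + F n) at 2.
  cbv beta.
  rewrite (sumR_ext d (fun i => u (S (S n)) i * (ln (Vf (S n) i) - ln (p (S n) i)))
    (fun i => u (S (S n)) i * ln (Vf (S n) i) - u (S (S n)) i * ln (p (S n) i)))
    by (intros; ring).
  rewrite sumR_minus. lra.
Qed.

Theorem fixed_share_regret (u : nat -> nat -> R) T : 0 < alpha < 1 -> 0 <= eta ->
  (1 <= T)%nat ->
  (forall t i, (1 <= t <= T)%nat -> (i < d)%nat -> 0 <= l t i <= 1) ->
  (forall t i, (1 <= t <= T)%nat -> (i < d)%nat -> 0 <= u t i) ->
  let U := sumR T (fun k => norm1 d (u (S k))) in
  eta * regret eta alpha d l u T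
  <= norm1 d (u 1%nat) * ln (INR d) + mshift d T u * (- ln (alpha / INR d))
     + (U - norm1 d (u 1%nat) - mshift d T u) * (- ln (1 - alpha)) + eta ^ 2 / 8 * U.
Proof.
intros Ha01 Heta HT Hl Hu U.
pose proof (mass_decomposition d T u HT Hu) as Hmass.
destruct T as [|T]; [lia|].
unfold regret. rewrite <- sumR_minus, <- sumR_scal.
eapply Rle_trans.
{ apply sumR_le. intros k Hk.
  apply (round_bound k (u (S k)) Heta); intros; [apply Hl | apply Hu]; lia. }
rewrite sumR_plus, sumR_scal. fold U.
pose proof (telescoping u T Ha01 Hu) as Htele.
assert (Hlast : sumR d (fun i => u (S T) i * ln (Vf T i)) <= 0).
{ apply sumR_nonpos. intros i Hi. pose proof (Vf_bounds T i Hi) as HV.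
  pose proof (ln_nonpos _ (proj1 HV) (proj2 HV)). pose proof (Hu (S T) i ltac:(lia) Hi). nra. }
rewrite sumR_plus, !sumR_scal_r in Htele.
unfold mshift in *. replace (S T - 1)%nat with T in * by lia.
fold U in Hmass.
set (S0 := sumR T (fun k => sumR d (fun i => Rmin (u (S k) i) (u (S (S k)) i)))) in *.
replace (U - _ - _) with S0 by lra. lra.
Qed.

End FixedShare.

(** Tuning the parameters. *)

Definition fs_guarantee (d : nat) (m0 U0 eta alpha B : R) : Prop :=
  forall (T : nat) (l u : nat -> nat -> R),
    (1 <= T)%nat ->
    (forall t i, (1 <= t <= T)%nat -> (i < d)%nat -> 0 <= l t i <= 1) ->
    (forall t i, (1 <= t <= T)%nat -> (i < d)%nat -> 0 <= u t i) ->
    norm1 d (u 1%nat) + mshift d T u <= m0 ->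
    sumR T (fun k => norm1 d (u (S k))) <= U0 ->
    regret eta alpha d l u T <= B.

Lemma tuned_learning_rate K U0 eta R : 0 < K -> 0 < U0 -> eta = sqrt (8 * K / U0) ->
  eta * R <= K + eta ^ 2 / 8 * U0 -> R <= sqrt (U0 / 2 * K).
Proof.
intros HK HU He H.
assert (Hpos : 0 < 8 * K / U0) by (apply Rdiv_lt_0_compat; lra).
assert (He2 : eta ^ 2 = 8 * K / U0) by (rewrite He; simpl; rewrite Rmult_1_r; apply sqrt_sqrt; lra).
assert (Hep : 0 < eta) by (rewrite He; apply sqrt_lt_R0; auto).
assert (Hs : sqrt (U0 / 2 * K) * eta = 2 * K).
{ rewrite He, <- sqrt_mult_alt by (apply Rmult_le_pos; lra).
  replace (U0 / 2 * K * (8 * K / U0)) with ((2 * K) * (2 * K)) by (field; lra).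
  apply sqrt_square. lra. }
assert (eta ^ 2 / 8 * U0 = K) by (rewrite He2; field; lra).
apply Rmult_le_reg_r with eta; auto. lra.
Qed.

Lemma budget_bound a1 m U m0 U0 lnd Ld L1 :
  0 <= a1 -> lnd <= Ld -> 0 <= L1 <= Ld -> a1 + m <= m0 -> U <= U0 ->
  a1 * lnd + m * Ld + (U - a1 - m) * L1 <= m0 * Ld + (U0 - m0) * L1.
Proof.
intros Ha1 Hlnd HL Hm HU.
assert (0 <= a1 * (Ld - lnd)) by (apply Rmult_le_pos; lra).
assert (0 <= (m0 - (a1 + m)) * (Ld - L1)) by (apply Rmult_le_pos; lra).
assert (0 <= (U0 - U) * L1) by (apply Rmult_le_pos; lra).
nra.
Qed.

Lemma mixing_costs D r : 1 <= D -> 0 < r -> r * D + r <= D ->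
  ln D < - ln (r / D) /\ 0 <= - ln (1 - r) <= - ln (r / D) /\
  r * ln D + hbin r = r * (- ln (r / D)) + (1 - r) * (- ln (1 - r)).
Proof.
intros HD Hr Hrd.
assert (Hr1 : r < 1) by nra.
assert (HLd : - ln (r / D) = ln D - ln r).
{ unfold Rdiv. rewrite ln_mult, ln_Rinv; try lra. apply Rinv_0_lt_compat; lra. }
assert (ln r < 0) by (rewrite <- ln_1; apply ln_increasing; lra).
pose proof (ln_nonpos (1 - r) ltac:(lra) ltac:(lra)).
split; [lra|]. split; [split; [lra|]|].
- apply Ropp_le_contravar, ln_le; [apply Rdiv_lt_0_compat; lra|].
  apply Rmult_le_reg_r with D; [lra|]. unfold Rdiv.
  rewrite Rmult_assoc, Rinv_l by lra. lra.
- rewrite hbin_eq, HLd by lra. ring.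
Qed.

Lemma small_ratio_guarantee d m0 U0 :
  (1 <= d)%nat -> 0 < m0 -> 0 < U0 -> m0 / U0 <= INR d / (INR d + 1) ->
  exists eta alpha : R, 0 < eta /\ 0 <= alpha <= 1 /\
    fs_guarantee d m0 U0 eta alpha (sqrt (U0 / 2 * (m0 * ln (INR d) + U0 * hbin (m0 / U0)))).
Proof.
intros Hd Hm HU Hreg.
pose proof (INR_d_pos d Hd) as Hdp.
set (r := m0 / U0) in *.
assert (Hr0 : 0 < r) by (unfold r; apply Rdiv_lt_0_compat; lra).
assert (Hrd : r * INR d + r <= INR d).
{ apply Rmult_le_compat_r with (r := INR d + 1) in Hreg; [|lra].
  unfold Rdiv in Hreg. rewrite Rmult_assoc, Rinv_l in Hreg by lra. lra. }
assert (Hm0 : m0 = r * U0) by (unfold r; field; lra).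
assert (Hlnd : 0 <= ln (INR d)) by (apply ln_nonneg, (le_INR 1); lia).
destruct (mixing_costs (INR d) r ltac:(apply (le_INR 1); lia) Hr0 Hrd)
  as (HLd & HL1 & Hentropy).
set (Ld := - ln (r / INR d)) in *. set (L1 := - ln (1 - r)) in *.
set (K := m0 * ln (INR d) + U0 * hbin r).
assert (HKe : K = m0 * Ld + (U0 - m0) * L1) by (unfold K; rewrite Hm0; nra).
assert (HK : 0 < K).
{ rewrite HKe. assert (0 < m0 * Ld) by (apply Rmult_lt_0_compat; lra).
  assert (0 <= (U0 - m0) * L1) by (apply Rmult_le_pos; nra). lra. }
set (eta := sqrt (8 * K / U0)).
assert (Heta : 0 < eta) by (apply sqrt_lt_R0, Rdiv_lt_0_compat; lra).
exists eta, r. split; [exact Heta|]. split; [nra|].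
intros T l u HT Hl Hu Hshift Hmass.
pose proof (fixed_share_regret eta r d l Hd ltac:(nra) u T ltac:(nra) ltac:(lra) HT Hl Hu)
  as Hregret. cbv zeta in Hregret. fold Ld L1 in Hregret.
apply (tuned_learning_rate K U0 eta); auto.
assert (Ha1 : 0 <= norm1 d (u 1%nat)) by (apply sumR_nonneg; intros; apply Rabs_pos).
pose proof (budget_bound _ _ _ _ _ (ln (INR d)) Ld L1 Ha1 (Rlt_le _ _ HLd) HL1 Hshift Hmass).
assert (eta ^ 2 / 8 * sumR T (fun k => norm1 d (u (S k))) <= eta ^ 2 / 8 * U0)
  by (apply Rmult_le_compat_l; [nra| exact Hmass]).
lra.
Qed.

Lemma fs_uniform eta d l k j : fs_pred eta 1 d l k j = / INR d.
Proof. destruct k; [reflexivity|]. rewrite fs_S. unfold Rdiv. ring. Qed.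

Lemma uniform_round d (q u x : nat -> R) : (1 <= d)%nat ->
  (forall i, (i < d)%nat -> q i = / INR d) ->
  (forall i, (i < d)%nat -> 0 <= u i) -> (forall i, (i < d)%nat -> 0 <= x i <= 1) ->
  norm1 d u * dot d q x - dot d u x <= (1 - / INR d) * norm1 d u.
Proof.
intros Hd Hq Hu Hx. pose proof (INR_d_pos d Hd) as Hdp.
assert (Hinv : 0 < / INR d <= 1).
{ split; [apply Rinv_0_lt_compat; lra|].
  rewrite <- Rinv_1. apply Rinv_le_contravar; [lra| apply (le_INR 1); lia]. }
assert (Hdinv : INR d * / INR d = 1) by (field; lra).
rewrite norm1_eq by auto. unfold dot.
rewrite (sumR_ext d (fun i => q i * x i) (fun i => / INR d * x i))
  by (intros i Hi; rewrite Hq; auto).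
rewrite sumR_scal.
rewrite <- (sumR_scal_r d u), <- sumR_minus, <- (sumR_scal d (1 - / INR d) u).
apply sumR_le. intros i Hi.
pose proof (sumR_le_term_plus d x i Hi ltac:(intros; apply Hx; auto)) as Hsum.
pose proof (Hx i Hi). pose proof (Hu i Hi).
assert (/ INR d * sumR d x - x i <= 1 - / INR d).
{ assert (/ INR d * sumR d x <= / INR d * (x i + (INR d - 1)))
    by (apply Rmult_le_compat_l; lra).
  nra. }
nra.
Qed.

Lemma ln_ge_square_gap D : 1 <= D -> 2 * (1 - / D) ^ 2 <= ln D.
Proof.
intros HD. eapply Rle_trans; [|apply ln_ge_rational; exact HD].
assert (Hinv : 0 < / D <= 1).
{ split; [apply Rinv_0_lt_compat; lra|]. rewrite <- Rinv_1. apply Rinv_le_contravar; lra. }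
assert (D * / D = 1) by (field; lra).
apply Rmult_le_reg_r with (D + 1); [lra|].
replace (2 * (D - 1) / (D + 1) * (D + 1)) with (2 * (D - 1)) by (field; lra).
nra.
Qed.

(* Regime m0 / U0 > d / (d + 1): the uniform forecaster (alpha = 1) already
   achieves the bound, since then U0 ln d <= m0 ln d + U0 h(m0 / U0). *)
Lemma large_ratio_guarantee d m0 U0 :
  (1 <= d)%nat -> 0 < m0 -> 0 < U0 -> m0 <= U0 -> INR d / (INR d + 1) < m0 / U0 ->
  exists eta alpha : R, 0 < eta /\ 0 <= alpha <= 1 /\
    fs_guarantee d m0 U0 eta alpha (sqrt (U0 / 2 * (m0 * ln (INR d) + U0 * hbin (m0 / U0)))).
Proof.
intros Hd Hm HU Hmu Hreg.
pose proof (INR_d_pos d Hd) as Hdp.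
assert (HD1 : 1 <= INR d) by (apply (le_INR 1); lia).
set (D := INR d) in *. set (r := m0 / U0) in *.
assert (Hm0 : m0 = r * U0) by (unfold r; field; lra).
assert (Hr : 0 < r <= 1) by (split; nra).
assert (HDr : D * (1 - r) <= 1).
{ apply Rmult_lt_compat_r with (r := D + 1) in Hreg; [|lra].
  unfold Rdiv in Hreg. rewrite Rmult_assoc, Rinv_l in Hreg by lra. nra. }
pose proof (hbin_ge r D Hr Hdp HDr).
pose proof (ln_ge_square_gap D HD1).
assert (Hgap : 0 <= 1 - / D) by (assert (/ D <= 1) by (rewrite <- Rinv_1; apply Rinv_le_contravar; lra); lra).
exists 1, 1. split; [lra|]. split; [lra|].
intros T l u HT Hl Hu _ Hmass.
unfold regret. rewrite <- sumR_minus.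
eapply Rle_trans.
{ apply sumR_le with (g := fun k => (1 - / D) * norm1 d (u (S k))). intros k Hk.
  apply uniform_round; auto; intros; [apply fs_uniform | apply Hu | apply Hl]; lia. }
rewrite sumR_scal.
assert (HU2 : (1 - / D) * sumR T (fun k => norm1 d (u (S k))) <= (1 - / D) * U0)
  by (apply Rmult_le_compat_l; auto).
eapply Rle_trans; [exact HU2|].
rewrite <- (sqrt_square ((1 - / D) * U0)) by nra.
apply sqrt_le_1_alt.
assert (U0 * ((1 - r) * ln D) <= U0 * hbin r) by (apply Rmult_le_compat_l; lra).
nra.
Qed.

Lemma entropy_relaxation d m0 U0 : 0 < m0 -> 0 < U0 -> m0 <= U0 ->
  sqrt (U0 / 2 * (m0 * ln (INR d) + U0 * hbin (m0 / U0)))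
  <= sqrt (U0 * m0 / 2 * (ln (INR d) + ln (exp 1 * U0 / m0))).
Proof.
intros Hm HU Hmu. apply sqrt_le_1_alt.
set (r := m0 / U0).
assert (Hm0 : m0 = r * U0) by (unfold r; field; lra).
assert (Hr : 0 < r <= 1) by (split; nra).
assert (E : ln (exp 1 * U0 / m0) = 1 - ln r).
{ replace (exp 1 * U0 / m0) with (exp 1 * / r) by (unfold r; field; lra).
  rewrite ln_mult, ln_exp, ln_Rinv; try lra; [apply exp_pos| apply Rinv_0_lt_compat; lra]. }
rewrite E.
pose proof (hbin_le r Hr).
assert (U0 * hbin r <= U0 * (r * (1 - ln r))) by (apply Rmult_le_compat_l; lra).
rewrite Hm0. nra.
Qed.

Theorem corollary1 (d : nat) (m0 U0 : R) :
  (1 <= d)%nat -> 0 < m0 -> 0 < U0 -> m0 <= U0 ->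
  exists eta alpha : R, 0 < eta /\ 0 <= alpha <= 1 /\
    forall (T : nat) (l u : nat -> nat -> R),
      (1 <= T)%nat ->
      (forall t i, (1 <= t <= T)%nat -> (i < d)%nat -> 0 <= l t i <= 1) ->
      (forall t i, (1 <= t <= T)%nat -> (i < d)%nat -> 0 <= u t i) ->
      norm1 d (u 1%nat) + mshift d T u <= m0 ->
      sumR T (fun k => norm1 d (u (S k))) <= U0 ->
      sumR T (fun k => norm1 d (u (S k)) * dot d (phat eta alpha d l (S k)) (l (S k)))
        - sumR T (fun k => dot d (u (S k)) (l (S k)))
        <= sqrt (U0 / 2 * (m0 * ln (INR d) + U0 * hbin (m0 / U0)))
      /\ sqrt (U0 / 2 * (m0 * ln (INR d) + U0 * hbin (m0 / U0)))
        <= sqrt (U0 * m0 / 2 * (ln (INR d) + ln (exp 1 * U0 / m0))).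
Proof.
intros Hd Hm HU Hmu.
assert (Hguar : exists eta alpha : R, 0 < eta /\ 0 <= alpha <= 1 /\
  fs_guarantee d m0 U0 eta alpha (sqrt (U0 / 2 * (m0 * ln (INR d) + U0 * hbin (m0 / U0))))).
{ destruct (Rle_dec (m0 / U0) (INR d / (INR d + 1))) as [Hr|Hr].
  - apply small_ratio_guarantee; auto.
  - apply large_ratio_guarantee; auto; lra. }
destruct Hguar as (eta & alpha & Heta & Halpha & Hbound).
exists eta, alpha. split; [exact Heta|]. split; [exact Halpha|].
intros T l u HT Hl Hu Hshift Hmass. split.
- exact (Hbound T l u HT Hl Hu Hshift Hmass).
- apply entropy_relaxation; auto.
Qed.
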